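(* For every locally-dominated input $\mathit{in} \in \mathcal{T}$, there exists a subset $S \subseteq \mathcal{T}$ consisting only of inputs that are not locally dominated, such that $\mathit{in} \sqsubseteq S$.
   Context: $\mathcal{T}$ is a finite set of inputs. Each input $\mathit{in}$ covers a nonempty finite set $\mathrm{Obj}(\mathit{in})$ of objectives and has a cost $c(\mathit{in}) > 0$. For $S \subseteq \mathcal{T}$, $\mathrm{Obj}(S) = \bigcup_{\mathit{in} \in S} \mathrm{Obj}(\mathit{in})$ and $c(S) = \sum_{\mathit{in} \in S} c(\mathit{in})$. There are no duplicates: two distinct inputs of $\mathcal{T}$ never have both the same set of covered objectives and the same cost. Local dominance of an input by a subset: for $\mathit{in} \in \mathcal{T}$ and $S \subseteq \mathcal{T}$, $\mathit{in} \sqsubseteq S$ iff $\mathit{in} \notin S$, $\mathrm{Obj}(\mathit{in}) \subseteq \mathrm{Obj}(S)$ and $c(\mathit{in}) \ge c(S)$. An input $\mathit{in} \in \mathcal{T}$ is locally dominated iff there exists $S \subseteq \mathcal{T}$ with $\mathit{in} \sqsubseteq S$. *)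

From mathcomp Require Import all_boot all_order all_algebra.
Set Implicit Arguments. Unset Strict Implicit. Unset Printing Implicit Defensive.
Import Order.TTheory GRing.Theory Num.Theory.
Local Open Scope ring_scope.

Section Inputs.
Variables (R : realFieldType) (T O : finType).
Variables (Obj : T -> {set O}) (c : T -> R).

Definition ObjS (S : {set T}) : {set O} := \bigcup_(i in S) Obj i.
Definition costS (S : {set T}) : R := \sum_(i in S) c i.

Definition ldom (i : T) (S : {set T}) : Prop :=
  [/\ i \notin S, Obj i \subset ObjS S & costS S <= c i].

Definition locally_dominated (i : T) : Prop := exists S : {set T}, ldom i S.
End Inputs.

From mathcomp Require Import all_boot all_order all_algebra.
Import Order.TTheory GRing.Theory Num.Theory.
Local Open Scope ring_scope.

(* Order inputs by cost, ties broken by covering more objectives. If [j ⊑ S]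
   then every member of [S] is strictly below [j]: with positive costs a
   member of equal cost must be all of [S], and then it covers strictly more
   than [j] by the absence of duplicates. By well-founded induction along this
   order, each locally dominated member of a dominating set can be replaced by
   a dominating set of non-dominated inputs, which neither uncovers an
   objective nor raises the cost. *)

Section LocalDominance.
Variables (R : realFieldType) (T O : finType).
Variables (Obj : T -> {set O}) (c : T -> R).

Section NonnegativeCosts.
Hypothesis c_ge0 : forall i, 0 <= c i.

Lemma costS_ge0 (S : {set T}) : 0 <= costS c S.
Proof. exact: sumr_ge0. Qed.

Lemma costS_setU_le (A B : {set T}) : costS c (A :|: B) <= costS c A + costS c B.
Proof.
rewrite /costS (big_setID A) /= setUK setDUl setDv set0U lerD2l.
by rewrite [leRHS](big_setID A) /= lerDr sumr_ge0.
Qed.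

Lemma costS_bigcup_le (S : {set T}) (F : T -> {set T}) :
  costS c (\bigcup_(k in S) F k) <= \sum_(k in S) costS c (F k).
Proof.
apply: (big_rec2 (fun A x => costS c A <= x)); first by rewrite /costS big_set0.
by move=> k A x _ leAx; apply: le_trans (costS_setU_le _ _) _; rewrite lerD2l.
Qed.

Lemma ldom_bigcup j (S : {set T}) (F : T -> {set T}) :
    ldom Obj c j S -> j \notin \bigcup_(k in S) F k ->
    (forall k, k \in S -> Obj k \subset ObjS Obj (F k) /\ costS c (F k) <= c k) ->
  ldom Obj c j (\bigcup_(k in S) F k).
Proof.
move=> [_ covS costSj] jF hF; split=> //.
  apply: subset_trans covS _; apply/subsetP => o /bigcupP[k kS ok].
  have /bigcupP[x xF ox] := subsetP (hF k kS).1 o ok.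
  by apply/bigcupP; exists x => //; apply/bigcupP; exists k.
apply: le_trans (costS_bigcup_le _ _) _; apply: le_trans costSj.
by apply: ler_sum => k kS; exact: (hF k kS).2.
Qed.

End NonnegativeCosts.

Lemma locally_dominatedP i :
  reflect (locally_dominated Obj c i)
    [exists S : {set T}, [&& i \notin S, Obj i \subset ObjS Obj S & costS c S <= c i]].
Proof.
apply: (iffP existsP) => -[S].
  by case/and3P=> iS covS costSi; exists S.
by case=> iS covS costSi; exists S; apply/and3P.
Qed.

Definition prec (k j : T) : bool :=
  (c k < c j) || ((c k == c j) && (#|Obj j| < #|Obj k|)%N).

Lemma prec_irr j : ~~ prec j j.
Proof. by rewrite /prec ltxx eqxx ltnn. Qed.

Lemma prec_trans k j l : prec k j -> prec j l -> prec k l.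
Proof.
rewrite /prec => /orP[lt1|/andP[/eqP-> lt1]] /orP[lt2|/andP[/eqP<- lt2]].
- by rewrite (lt_trans lt1 lt2).
- by rewrite lt1.
- by rewrite lt2.
- by rewrite eqxx (ltn_trans lt2 lt1) orbT.
Qed.

Definition prec_rank (j : T) : nat := #|[set k | prec k j]|.

Lemma prec_rank_lt k j : prec k j -> (prec_rank k < prec_rank j)%N.
Proof.
move=> kj; apply: proper_card; apply/properP; split.
  by apply/subsetP => x; rewrite !inE => xk; exact: prec_trans xk kj.
by exists k; rewrite !inE // (negbTE (prec_irr k)).
Qed.

Section PositiveCosts.
Hypothesis c_pos : forall i, 0 < c i.
Hypothesis no_dup : forall i j, Obj i = Obj j -> c i = c j -> i = j.

Let c_ge0 i : 0 <= c i. Proof. exact: ltW. Qed.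

Lemma costS_le0 (S : {set T}) : costS c S <= 0 -> S = set0.
Proof.
move=> costS_le0; apply/setP => k; rewrite inE; apply/negP => kS.
move: costS_le0; rewrite /costS (big_setD1 k kS) /= leNgt.
by rewrite ltr_pwDl ?c_pos ?costS_ge0.
Qed.

Lemma ldom_prec j (S : {set T}) k : ldom Obj c j S -> k \in S -> prec k j.
Proof.
move=> [jS covS costSj] kS; rewrite /prec.
have costS_split : costS c S = c k + costS c (S :\ k) by rewrite /costS (big_setD1 k kS).
have : c k <= c j by apply: le_trans costSj; rewrite costS_split lerDl costS_ge0.
rewrite le_eqVlt => /orP[/eqP ckj|->] //; rewrite ckj eqxx ltxx /=.
have S1 : S = [set k].
  apply/eqP; rewrite eqEsubset sub1set kS andbT -setD_eq0.
  by apply/eqP/costS_le0; move: costSj; rewrite costS_split ckj gerDl.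
move: covS; rewrite S1 /ObjS big_set1 => /subset_leqif_cards[le_card eq_card].
rewrite ltn_neqAle le_card andbT eq_card; apply: contra jS => /eqP Ojk.
by rewrite S1 (no_dup _ _ Ojk (esym ckj)) set11.
Qed.

Lemma exists_nondominated_ldom j : locally_dominated Obj c j ->
  exists S : {set T},
    (forall k, k \in S -> ~ locally_dominated Obj c k) /\ ldom Obj c j S.
Proof.
have [n] := ubnP (prec_rank j); elim: n j => // n IHn j /ltnSE rank_j [S ldomS].
(* [F k] is [[set k]] if [k] is not dominated, else a set given by induction. *)
have /fin_all_exists[F hF] : forall k, exists Fk : {set T}, k \in S ->
    [/\ forall x, x \in Fk -> ~ locally_dominated Obj c x, j \notin Fk,
        Obj k \subset ObjS Obj Fk & costS c Fk <= c k].
  move=> k; have [kS|_] := boolP (k \in S); last by exists set0.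
  have kj : prec k j := ldom_prec _ _ _ ldomS kS.
  case: (locally_dominatedP k) => [domk | ndomk].
    have [|Fk [ndomFk ldomFk]] := IHn k _ domk.
      exact: leq_trans (prec_rank_lt _ _ kj) rank_j.
    exists Fk => _; case: ldomFk => [kFk covFk costFk]; split=> //.
    apply/negP => /(ldom_prec _ _ _ (And3 kFk covFk costFk)) jk.
    by have := prec_trans _ _ _ jk kj; rewrite (negbTE (prec_irr j)).
  exists [set k] => _; split.
  - by move=> x /set1P->.
  - by apply/set1P => jk; move: kj; rewrite -jk (negbTE (prec_irr j)).
  - by rewrite /ObjS big_set1.
  - by rewrite /costS big_set1.
exists (\bigcup_(k in S) F k); split.
  by move=> x /bigcupP[k kS xF]; case: (hF k kS) => /(_ x xF).
apply: (ldom_bigcup c_ge0 _ _ _ ldomS).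
  by apply/negP => /bigcupP[k kS jF]; case: (hF k kS) => _ /negP.
by move=> k kS; case: (hF k kS).
Qed.

End PositiveCosts.
End LocalDominance.

Theorem mainTheorem10 (R : realFieldType) (T O : finType)
    (Obj : T -> {set O}) (c : T -> R)
    (Obj_nonempty : forall i : T, Obj i != set0)
    (c_pos : forall i : T, 0 < c i)
    (no_dup : forall i j : T, Obj i = Obj j -> c i = c j -> i = j) :
  forall i : T, locally_dominated Obj c i ->
    exists S : {set T},
      (forall j : T, j \in S -> ~ locally_dominated Obj c j) /\ ldom Obj c i S.
Proof. exact: exists_nondominated_ldom. Qed.
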